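(* Let $\pi$ be a probability distribution on $\mathbb{R}^d$ with coordinates partitioned into $s$ blocks, and for a probability vector $p=(p_1,\dots,p_s)$ with all $p_i>0$ let $\mathrm{Gap}(p)$ be the $L_2$-spectral gap of the Random Scan Gibbs Sampler RSGS($p$) for $\pi$. Then for any probability vectors $p,q$ with positive entries, $$\mathrm{Gap}(p)\le\Big(\max_{i=1,\dots,s}\frac{p_i}{q_i}\Big)\mathrm{Gap}(q);$$ in particular $\mathrm{Gap}(p)\le\big(\max_{i}sp_i\big)\,\mathrm{Gap}(1/s)$, where $\mathrm{Gap}(1/s)$ is the spectral gap of RSGS with uniform selection probabilities $(1/s,\dots,1/s)$.
   Context: RSGS($p$) is the Markov kernel $P_p=\sum_{i=1}^sp_iPr_i$, where $Pr_i$ replaces the block $x_i$ of $x=(x_1,\dots,x_s)$ by a draw from the full conditional $\pi(x_i\mid x_{-i})$. For $f\in L_2(\mathbb{R}^d,\pi)$ let $\pi(f)=\int f\,d\pi$. The $L_2$-rate of convergence $\rho(p)$ is the smallest $\rho>0$ such that for all $f\in L_2(\mathbb{R}^d,\pi)$ and $r>\rho$, $\lim_{n\to\infty}r^{-2n}\mathbb{E}_\pi[\{(P_p^nf)(x)-\pi(f)\}^2]=0$, and $\mathrm{Gap}(p)=1-\rho(p)$. *)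

From HB Require Import structures.
From mathcomp Require Import all_boot all_order all_algebra.
From mathcomp Require Import all_classical all_reals all_analysis.
Set Implicit Arguments. Unset Strict Implicit. Unset Printing Implicit Defensive.
Import Order.TTheory GRing.Theory Num.Theory.
Import numFieldNormedType.Exports.
Local Open Scope classical_set_scope.
Local Open Scope ring_scope.

(* State space R^d := d.-tuple R with the product (= Borel) sigma-algebra
   generated by the coordinate projections (library instance).
   Coordinates are partitioned into s blocks by blk : 'I_d -> 'I_s. *)

Definition same_off_block (R : realType) (d s : nat) (blk : 'I_d -> 'I_s)
  (i : 'I_s) (x y : d.-tuple R) : Prop :=
  forall j : 'I_d, blk j != i -> tnth y j = tnth x j.

(* A set G is sigma(x_{-i})-measurable: measurable and determined by x_{-i}. *)
Definition block_saturated (R : realType) (d s : nat) (blk : 'I_d -> 'I_s)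
  (i : 'I_s) (G : set (d.-tuple R)) : Prop :=
  measurable G /\
  forall x y, same_off_block blk i x y -> (G x <-> G y).

(* k is (a version of) the Gibbs update of block i for pi: from x it keeps
   x_{-i} and draws x_i from the full conditional pi(x_i | x_{-i}), i.e.
   k(x, .) is a regular conditional distribution of X given X_{-i}. *)
Definition full_conditional_kernel (R : realType) (d s : nat)
  (blk : 'I_d -> 'I_s) (pi : probability (d.-tuple R) R) (i : 'I_s)
  (k : R.-pker (d.-tuple R) ~> (d.-tuple R)) : Prop :=
  [/\ (forall x, k x [set y | same_off_block blk i x y] = 1%E),
      (forall x x', same_off_block blk i x x' ->
         forall A, measurable A -> k x A = k x' A) &
      (forall A G, measurable A -> block_saturated blk i G ->
         (\int[pi]_(x in G) k x A = pi (A `&` G))%E)].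

Definition pos_prob_vector (R : realType) (s : nat) (p : 'I_s -> R) : Prop :=
  (forall i, 0 < p i) /\ \sum_(i < s) p i = 1.

Definition uniform_vector (R : realType) (s : nat) : 'I_s -> R :=
  fun _ => (s%:R)^-1.

Definition rsgs_op (R : realType) (d s : nat)
  (k : 'I_s -> R.-pker (d.-tuple R) ~> (d.-tuple R)) (p : 'I_s -> R)
  (f : d.-tuple R -> R) : d.-tuple R -> R :=
  fun x => \sum_(i < s) p i * fine (\int[k i x]_y (f y)%:E)%E.

Definition pi_mean (R : realType) (d : nat) (pi : probability (d.-tuple R) R)
  (f : d.-tuple R -> R) : R := fine (\int[pi]_x (f x)%:E)%E.

Definition in_L2 (R : realType) (d : nat) (pi : probability (d.-tuple R) R)
  (f : d.-tuple R -> R) : Prop :=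
  measurable_fun setT f /\ (\int[pi]_x ((f x) ^+ 2)%:E < +oo)%E.

Definition L2_rate_ok (R : realType) (d s : nat)
  (pi : probability (d.-tuple R) R)
  (k : 'I_s -> R.-pker (d.-tuple R) ~> (d.-tuple R)) (p : 'I_s -> R)
  (rho : R) : Prop :=
  forall f, in_L2 pi f -> forall r : R, rho < r ->
    ((r ^- (2 * n))%:E *
      \int[pi]_x (((iter n (rsgs_op k p) f x - pi_mean pi f) ^+ 2)%:E))%E
      @[n --> \oo] --> 0%E.

Definition L2_rate (R : realType) (d s : nat)
  (pi : probability (d.-tuple R) R)
  (k : 'I_s -> R.-pker (d.-tuple R) ~> (d.-tuple R)) (p : 'I_s -> R) : R :=
  inf [set rho : R | 0 < rho /\ L2_rate_ok pi k p rho].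

Definition Gap (R : realType) (d s : nat)
  (pi : probability (d.-tuple R) R)
  (k : 'I_s -> R.-pker (d.-tuple R) ~> (d.-tuple R)) (p : 'I_s -> R) : R :=
  1 - L2_rate pi k p.

From HB Require Import structures.
From mathcomp Require Import all_boot all_order all_algebra.
From mathcomp Require Import all_classical all_reals all_analysis.
From mathcomp Require Import measurable_realfun ring lra.
Set Implicit Arguments. Unset Strict Implicit. Unset Printing Implicit Defensive.
Import Order.TTheory GRing.Theory Num.Theory.
Import numFieldNormedType.Exports.
Local Open Scope classical_set_scope.
Local Open Scope ring_scope.

(* Write [cov] for the covariance under pi and [P p = sum_i p_i Pr_i]. Each
   [Pr_i] is the conditional expectation given [x_{-i}], an orthogonal
   projection of L2(pi), so [P p] is self-adjoint and positive, and
     Var u - cov (P p u) u = sum_i p_i (Var u - Var (Pr_i u)),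
   a sum of nonnegative terms that is monotone in [p]. The L2-rate rho(p) is
   the supremum of [cov (P p u) u / Var u]: if that ratio is at most [c] then
   Cauchy-Schwarz for the form [(u, v) |-> cov (P p u) v] gives
   [Var (P p ^ n u) <= c ^ (2 n) Var u]; conversely self-adjointness makes
   [n |-> Var (P p ^ n u)] log-convex, so it cannot decay faster. Hence
   Gap(p) is the infimum of [(Var u - cov (P p u) u) / Var u], and
   [p_i <= M q_i] for all [i] gives [Gap(p) <= M Gap(q)]. *)

Lemma quadratic_ge0_sqr_le (R : rcfType) (a b c : R) :
  (forall t, 0 <= t ^+ 2 * a + 2 * t * b + c) -> b ^+ 2 <= a * c.
Proof.
move=> q_ge0; pose p := Poly [:: c; 2 * b; a].
have p_ge0 t : 0 <= p.[t].
  by rewrite horner_Poly /= mul0r add0r; have := q_ge0 t; nra.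
have := deg_le2_poly_ge0 (size_Poly [:: c; 2 * b; a]) p_ge0.
by rewrite !coef_Poly /= exprMn; nra.
Qed.

Section square_integrable.
Context d (T : measurableType d) (R : realType) (mu : {measure set T -> \bar R}).
Hypothesis mu1 : mu setT = 1%E.
Implicit Types (f g u v w : T -> R).

Local Notation integrableR f := (mu.-integrable setT (EFin \o f)).

Definition square_integrable f :=
  measurable_fun setT f /\ integrableR (fun x => f x ^+ 2).

Lemma square_integrableP f : square_integrable f <->
  measurable_fun setT f /\ (\int[mu]_x (f x ^+ 2)%:E < +oo)%E.
Proof.
have sqr_norm : (\int[mu]_x `|(EFin \o (fun x => (f x ^+ 2)%R)) x| =
    \int[mu]_x (f x ^+ 2)%:E)%E.
  by apply: eq_integral => x _; rewrite /= ger0_norm ?sqr_ge0.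
split=> -[mf fi]; split=> //; first by case/integrableP: fi; rewrite sqr_norm.
apply/integrableP; split; last by rewrite sqr_norm.
by apply/measurable_EFinP; exact: measurable_funX.
Qed.

Lemma integrable_cst c : integrableR (cst c).
Proof.
apply/integrableP; split; first exact/measurable_EFinP/measurable_cst.
rewrite (_ : (fun x => _) = cst `|c|%:E); last by apply/funext.
by rewrite integral_cst // mu1 mule1 ltry.
Qed.

Lemma integrable_le f g : measurable_fun setT f -> integrableR g ->
  (forall x, `|f x| <= g x) -> integrableR f.
Proof.
move=> mf ig fg; apply: le_integrable ig => //; first exact/measurable_EFinP.
by move=> x _ /=; rewrite lee_fin (le_trans (fg x)) // ler_norm.
Qed.

Lemma integrableD_EFin f g : integrableR f -> integrableR g ->
  integrableR (fun x => f x + g x).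
Proof.
move=> fi gi; have := integrableD measurableT fi gi.
by apply: eq_integrable => // x _ /=; rewrite EFinD.
Qed.

Lemma integrableZl_EFin c f : integrableR f -> integrableR (fun x => c * f x).
Proof.
move=> fi; have := integrableZl measurableT c fi.
by apply: eq_integrable => // x _ /=; rewrite EFinM.
Qed.

Lemma square_integrable_integrableM f g : square_integrable f ->
  square_integrable g -> integrableR (fun x => f x * g x).
Proof.
move=> [mf fi] [mg gi]; apply: (integrable_le _ (integrableD_EFin fi gi)).
  exact: measurable_funM.
move=> x; rewrite normrM -[f x ^+ 2]real_normK ?num_real //.
rewrite -[g x ^+ 2]real_normK ?num_real //.
by have := normr_ge0 (f x); have := normr_ge0 (g x); nra.
Qed.

Lemma square_integrable_cst c : square_integrable (cst c).
Proof. by split; [exact: measurable_cst | exact: (integrable_cst (c ^+ 2))]. Qed.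

Lemma square_integrable_integrable f : square_integrable f -> integrableR f.
Proof.
move=> f2; have := square_integrable_integrableM f2 (square_integrable_cst 1).
by apply: eq_integrable => // x _ /=; rewrite mulr1.
Qed.

Lemma square_integrableD f g : square_integrable f -> square_integrable g ->
  square_integrable (fun x => f x + g x).
Proof.
move=> [mf fi] [mg gi]; split; first exact: measurable_funD.
apply: (integrable_le _
  (integrableD_EFin (integrableZl_EFin 2 fi) (integrableZl_EFin 2 gi))).
  by apply: measurable_funX; exact: measurable_funD.
by move=> x; rewrite ger0_norm ?sqr_ge0 //; have := sqr_ge0 (f x - g x); nra.
Qed.

Lemma square_integrableZl c f : square_integrable f ->
  square_integrable (fun x => c * f x).
Proof.
move=> [mf fi]; split; first exact: measurable_funM.
by have := integrableZl_EFin (c ^+ 2) fi; apply: eq_integrable => // x _ /=;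
  rewrite exprMn.
Qed.

Lemma square_integrable_sum (I : Type) (r : seq I) (c : I -> R) (F : I -> T -> R) :
  (forall i, square_integrable (F i)) ->
  square_integrable (fun x => \sum_(i <- r) c i * F i x).
Proof.
move=> F2; elim: r => [|i r IHr].
  by under eq_fun do rewrite big_nil; exact: square_integrable_cst.
under eq_fun do rewrite big_cons.
by apply: square_integrableD IHr; exact: square_integrableZl.
Qed.

Lemma Rintegral_sum (I : Type) (r : seq I) (F : I -> T -> R) :
  (forall i, integrableR (F i)) ->
  \int[mu]_x (\sum_(i <- r) F i x) = \sum_(i <- r) \int[mu]_x F i x.
Proof.
move=> F1; elim: r => [|i r IHr].
  by under eq_Rintegral do rewrite big_nil; rewrite Rintegral_cst // mu1 mul0r big_nil.
under eq_Rintegral do rewrite big_cons.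
rewrite RintegralD // ?big_cons ?IHr //.
elim: r {IHr} => [|j r IHr].
  by under eq_fun do rewrite big_nil; exact: integrable_cst.
by under eq_fun do rewrite big_cons; exact: integrableD_EFin.
Qed.

Definition cov u v :=
  \int[mu]_x (u x * v x) - (\int[mu]_x u x) * (\int[mu]_x v x).

Lemma covC u v : cov u v = cov v u.
Proof. by rewrite /cov mulrC; under eq_Rintegral do rewrite mulrC. Qed.

Lemma covZl c u v : square_integrable u -> square_integrable v ->
  cov (fun x => c * u x) v = c * cov u v.
Proof.
move=> u2 v2; have u1 := square_integrable_integrable u2.
have uv1 := square_integrable_integrableM u2 v2.
by rewrite /cov; under eq_Rintegral do rewrite -mulrA; rewrite !RintegralZl //; ring.
Qed.

Lemma covDl u w v : square_integrable u -> square_integrable w ->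
  square_integrable v -> cov (fun x => u x + w x) v = cov u v + cov w v.
Proof.
move=> u2 w2 v2; have u1 := square_integrable_integrable u2.
have w1 := square_integrable_integrable w2.
have uv1 := square_integrable_integrableM u2 v2.
have wv1 := square_integrable_integrableM w2 v2.
by rewrite /cov; under eq_Rintegral do rewrite mulrDl; rewrite !RintegralD //; ring.
Qed.

Lemma cov_suml (I : Type) (r : seq I) (c : I -> R) (F : I -> T -> R) v :
  (forall i, square_integrable (F i)) -> square_integrable v ->
  cov (fun x => \sum_(i <- r) c i * F i x) v = \sum_(i <- r) c i * cov (F i) v.
Proof.
move=> F2 v2; elim: r => [|i r IHr].
  under eq_fun do rewrite big_nil.
  by rewrite big_nil /cov; under eq_Rintegral do rewrite mul0r;
    rewrite Rintegral_cst // mul0r mul0r subrr.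
under eq_fun do rewrite big_cons.
rewrite covDl ?covZl ?big_cons ?IHr //; first exact: square_integrableZl.
exact: square_integrable_sum.
Qed.

Lemma cov_quadratic t u v : square_integrable u -> square_integrable v ->
  cov (fun x => t * u x + v x) (fun x => t * u x + v x) =
  t ^+ 2 * cov u u + 2 * t * cov u v + cov v v.
Proof.
move=> u2 v2; have tuv2 : square_integrable (fun x => t * u x + v x).
  by apply: square_integrableD => //; exact: square_integrableZl.
rewrite covDl ?covZl //; last exact: square_integrableZl.
rewrite (covC u) (covC v) !covDl ?covZl //; try exact: square_integrableZl.
by rewrite (covC v u); ring.
Qed.

Lemma Rintegral_centered_sqr w : square_integrable w ->
  \int[mu]_x ((w x - \int[mu]_y w y) ^+ 2) = cov w w.
Proof.
move=> w2; set m := \int[mu]_y w y.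
have w1 := square_integrable_integrable w2.
have ww1 := square_integrable_integrableM w2 w2.
transitivity (\int[mu]_x (w x * w x + ((-2 * m) * w x + m ^+ 2))).
  by apply: eq_Rintegral => x _; ring.
rewrite RintegralD //; last first.
  exact: integrableD_EFin (integrableZl_EFin _ w1) (integrable_cst _).
rewrite RintegralD //; [|exact: integrableZl_EFin|exact: integrable_cst].
by rewrite RintegralZl // Rintegral_cst // mu1 /cov -/m /=; ring.
Qed.

Lemma integral_centered_sqr w : square_integrable w ->
  (\int[mu]_x ((w x - \int[mu]_y w y) ^+ 2)%:E)%E = (cov w w)%:E.
Proof.
move=> w2; rewrite -Rintegral_centered_sqr // fineK //.
have [_ /=] := square_integrableD w2 (square_integrable_cst (- \int[mu]_y w y)).
exact: integrable_fin_num.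
Qed.

Lemma cov_ge0 w : square_integrable w -> 0 <= cov w w.
Proof.
by move=> w2; rewrite -Rintegral_centered_sqr // Rintegral_ge0 // => x _;
  exact: sqr_ge0.
Qed.

Lemma cov_sqr_le u v : square_integrable u -> square_integrable v ->
  cov u v ^+ 2 <= cov u u * cov v v.
Proof.
move=> u2 v2; apply: quadratic_ge0_sqr_le => t; rewrite -cov_quadratic //.
by apply: cov_ge0; apply: square_integrableD => //; exact: square_integrableZl.
Qed.

End square_integrable.

Lemma log_convex_geometric_lb (R : realFieldType) (b : nat -> R) (t : R) :
  0 < t -> 0 < b 0%N -> t * b 0%N <= b 1%N ->
  (forall n, b n.+1 ^+ 2 <= b n * b n.+2) -> forall n, t ^+ n * b 0%N <= b n.
Proof.
move=> t_gt0 b0_gt0 b1_ge logcvx.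
have step n : 0 < b n /\ t * b n <= b n.+1.
  elim: n => [|n [bn_gt0 bn_le]]; first by [].
  have bn1_gt0 : 0 < b n.+1 by apply: lt_le_trans bn_le; exact: mulr_gt0.
  split=> //; rewrite -(ler_pM2l bn_gt0) (le_trans _ (logcvx n)) //; nra.
elim=> [|n IHn]; first by rewrite expr0 mul1r.
by rewrite exprS -mulrA (le_trans _ (step n).2) // ler_pM2l.
Qed.

Section random_scan.
Context d (T : measurableType d) (R : realType) (mu : {measure set T -> \bar R}).
Hypothesis mu1 : mu setT = 1%E.
Variables (s : nat) (Pr : 'I_s -> (T -> R) -> T -> R).
Local Notation L2 := (square_integrable mu).

Hypothesis square_integrable_Pr : forall i u, L2 u -> L2 (Pr i u).
Hypothesis Rintegral_Pr : forall i u, L2 u ->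
  \int[mu]_x Pr i u x = \int[mu]_x u x.
(* Each [Pr i] is an orthogonal projection of L2(mu). *)
Hypothesis cov_Pr : forall i u v, L2 u -> L2 v ->
  cov mu (Pr i u) v = cov mu (Pr i u) (Pr i v).

Lemma cov_Pr_le i u : L2 u -> cov mu (Pr i u) (Pr i u) <= cov mu u u.
Proof.
move=> u2; have Pu2 := square_integrable_Pr i u2.
have := cov_sqr_le mu1 Pu2 u2; rewrite [cov mu (Pr i u) u]cov_Pr //.
by have := cov_ge0 mu1 Pu2; have := cov_ge0 mu1 u2; nra.
Qed.

Definition rscan (p : 'I_s -> R) (u : T -> R) : T -> R :=
  fun x => \sum_(i < s) p i * Pr i u x.

Section fixed_vector.
Variable p : 'I_s -> R.
Hypothesis p_ge0 : forall i, 0 <= p i.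

Lemma square_integrable_rscan u : L2 u -> L2 (rscan p u).
Proof.
by move=> u2; apply: (square_integrable_sum mu1) => i; exact: square_integrable_Pr.
Qed.

Lemma square_integrable_iter_rscan n u : L2 u -> L2 (iter n (rscan p) u).
Proof. by move=> u2; elim: n => [|n IHn] //=; exact: square_integrable_rscan. Qed.

Lemma cov_rscan u v : L2 u -> L2 v ->
  cov mu (rscan p u) v = \sum_(i < s) p i * cov mu (Pr i u) (Pr i v).
Proof.
move=> u2 v2; rewrite (cov_suml mu1) //; last by move=> i; exact: square_integrable_Pr.
by apply: eq_bigr => i _; rewrite cov_Pr.
Qed.

Lemma cov_rscanC u v : L2 u -> L2 v -> cov mu (rscan p u) v = cov mu u (rscan p v).
Proof.
move=> u2 v2; rewrite [RHS]covC !cov_rscan //.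
by apply: eq_bigr => i _; rewrite covC.
Qed.

Lemma Rintegral_rscan u : \sum_(i < s) p i = 1 -> L2 u ->
  \int[mu]_x rscan p u x = \int[mu]_x u x.
Proof.
move=> p1 u2.
have Pu1 i := square_integrable_integrable mu1 (square_integrable_Pr i u2).
rewrite /rscan (Rintegral_sum mu1) //; last by move=> i; exact: integrableZl_EFin.
under eq_bigr do rewrite RintegralZl ?Rintegral_Pr //.
by rewrite -mulr_suml p1 mul1r.
Qed.

Lemma Rintegral_iter_rscan n u : \sum_(i < s) p i = 1 -> L2 u ->
  \int[mu]_x iter n (rscan p) u x = \int[mu]_x u x.
Proof.
move=> p1 u2; elim: n => [|n IHn] //=.
by rewrite Rintegral_rscan ?IHn //; exact: square_integrable_iter_rscan.
Qed.

Lemma cov_rscan_ge0 u : L2 u -> 0 <= cov mu (rscan p u) u.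
Proof.
move=> u2; rewrite cov_rscan //; apply: sumr_ge0 => i _.
by apply: mulr_ge0 => //; apply: cov_ge0 => //; exact: square_integrable_Pr.
Qed.

Lemma cov_rscan_le u : \sum_(i < s) p i = 1 -> L2 u ->
  cov mu (rscan p u) u <= cov mu u u.
Proof.
move=> p1 u2; rewrite cov_rscan // -[leRHS]mul1r -p1 mulr_suml.
by apply: ler_sum => i _; apply: ler_wpM2l => //; exact: cov_Pr_le.
Qed.

Lemma cov_rscan_sqr_le u w : L2 u -> L2 w ->
  cov mu (rscan p u) w ^+ 2 <= cov mu (rscan p u) u * cov mu (rscan p w) w.
Proof.
move=> u2 w2; rewrite !cov_rscan //; apply: quadratic_ge0_sqr_le => t.
rewrite !mulr_sumr -!big_split /=; apply: sumr_ge0 => i _.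
have Pu2 := square_integrable_Pr i u2; have Pw2 := square_integrable_Pr i w2.
have := cov_ge0 mu1 (square_integrableD (square_integrableZl t Pu2) Pw2).
by rewrite (cov_quadratic mu1) //; have := p_ge0 i; nra.
Qed.

Lemma cov_rscan_rscan_le c : 0 <= c ->
  (forall v, L2 v -> cov mu (rscan p v) v <= c * cov mu v v) ->
  forall u, L2 u -> cov mu (rscan p u) (rscan p u) <= c ^+ 2 * cov mu u u.
Proof.
move=> c0 form_le u u2; have Pu2 := square_integrable_rscan u2.
have := cov_rscan_sqr_le u2 Pu2; have := form_le u u2; have := form_le _ Pu2.
have := cov_rscan_ge0 u2; have := cov_rscan_ge0 Pu2.
have := cov_ge0 mu1 u2; have := cov_ge0 mu1 Pu2.
set X := cov mu (rscan p u) (rscan p u); set U := cov mu u u.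
set A := cov mu (rscan p u) u; set B := cov mu (rscan p (rscan p u)) (rscan p u).
move=> X0 U0 B0 A0 B_le A_le X2_le.
have AB_le : A * B <= (c * U) * (c * X) by apply: ler_pM.
have X2_le' : X * X <= (c * U) * (c * X) by rewrite -expr2 (le_trans X2_le).
have [->|X_neq0] := eqVneq X 0; first by rewrite mulr_ge0 ?exprn_ge0.
have X_gt0 : 0 < X by rewrite lt_neqAle eq_sym X_neq0.
by rewrite -(ler_pM2r X_gt0) (le_trans X2_le') // mulrACA -expr2 mulrA.
Qed.

Definition is_decay_rate rho := forall u, L2 u -> forall r, rho < r ->
  (fun n => r ^- (2 * n) * cov mu (iter n (rscan p) u) (iter n (rscan p) u))
    @ \oo --> 0.

Lemma is_decay_rate_of_cov_rscan_le c : 0 <= c ->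
  (forall u, L2 u -> cov mu (rscan p u) u <= c * cov mu u u) ->
  forall rho, c < rho -> is_decay_rate rho.
Proof.
move=> c0 form_le rho c_lt u u2 r rho_lt.
have r_gt0 : 0 < r by rewrite (le_lt_trans c0) // (lt_trans c_lt).
have b_le n : cov mu (iter n (rscan p) u) (iter n (rscan p) u) <=
    (c ^+ 2) ^+ n * cov mu u u.
  elim: n => [|n IHn]; first by rewrite expr0 mul1r.
  apply: le_trans (cov_rscan_rscan_le c0 form_le (square_integrable_iter_rscan n u2)) _.
  rewrite [(c ^+ 2) ^+ n.+1]exprS -mulrA.
  by apply: ler_wpM2l; [exact: sqr_ge0 | exact: IHn].
apply: (@squeeze_cvgr _ _ _ _ (cst 0) (fun n => cov mu u u * ((c / r) ^+ 2) ^+ n)).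
- apply: nearW => n; apply/andP; split.
    rewrite mulr_ge0 ?invr_ge0 ?exprn_ge0 ?(ltW r_gt0) //.
    exact/cov_ge0/square_integrable_iter_rscan.
  rewrite mulrC -exprM expr_div_n exprM mulrA.
  apply: ler_wpM2r; first by rewrite invr_ge0 exprn_ge0 // sqr_ge0.
  by rewrite mulrC exprM; exact: b_le.
- exact: cvg_cst.
- rewrite -(mulr0 (cov mu u u)); apply: cvgMl_tmp; apply: cvg_expr.
  rewrite ger0_norm ?sqr_ge0 // expr_lt1 ?divr_ge0 ?(ltW r_gt0) //.
  by rewrite ltr_pdivrMr // mul1r (lt_trans c_lt).
Qed.

Lemma cov_rscan_le_of_is_decay_rate rho : 0 <= rho -> is_decay_rate rho ->
  forall u, L2 u -> cov mu (rscan p u) u <= rho * cov mu u u.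
Proof.
move=> rho0 rate u u2.
pose b n := cov mu (iter n (rscan p) u) (iter n (rscan p) u).
have b0E : b 0%N = cov mu u u by [].
have A2_le : cov mu (rscan p u) u ^+ 2 <= b 1%N * b 0%N.
  by apply: cov_sqr_le => //; exact: square_integrable_rscan.
have [uu_eq0|uu_neq0] := eqVneq (cov mu u u) 0.
  rewrite b0E uu_eq0 mulr0 in A2_le *.
  by have := cov_rscan_ge0 u2; nra.
have b0_gt0 : 0 < b 0%N by rewrite b0E lt_neqAle eq_sym uu_neq0 cov_ge0.
rewrite leNgt; apply/negP; set A := cov mu (rscan p u) u in A2_le * => rho_lt.
pose a := A / b 0%N; pose r := (rho + a) / 2.
have rho_lt_a : rho < a by rewrite ltr_pdivlMr.
have [rho_lt_r r_lt_a] : rho < r /\ r < a by split; rewrite /r; lra.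
have [r_gt0 a_gt0] : 0 < r /\ 0 < a by split; lra.
have b1_ge : a ^+ 2 * b 0%N <= b 1%N.
  by rewrite -(ler_pM2r b0_gt0) -mulrA -expr2 -exprMn /a divfK ?gt_eqF.
have logcvx n : b n.+1 ^+ 2 <= b n * b n.+2.
  have wn2 := square_integrable_iter_rscan n u2.
  rewrite /b /= [X in X ^+ 2]cov_rscanC //; last exact: square_integrable_rscan.
  by apply: cov_sqr_le => //; do 2 apply: square_integrable_rscan.
have b_ge := log_convex_geometric_lb (exprn_gt0 2 a_gt0) b0_gt0 b1_ge logcvx.
suff : b 0%N <= 0 by rewrite leNgt b0_gt0.
apply: (cvgr_to_ge (rate u u2 r rho_lt_r)); apply: nearW => n.
rewrite -[leLHS]mul1r -(mulVf (_ : r ^+ (2 * n) != 0)) ?expf_neq0 ?gt_eqF //.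
rewrite -mulrA ler_pM2l ?invr_gt0 ?exprn_gt0 //.
apply: le_trans (b_ge n); rewrite exprM ler_pM2r //.
have r2_le : r ^+ 2 <= a ^+ 2 by rewrite lerXn2r ?nnegrE ?ltW.
by rewrite lerXn2r // nnegrE exprn_ge0 // ltW.
Qed.

End fixed_vector.

Lemma cov_rscan_comparison p q M u :
  \sum_(i < s) p i = 1 -> \sum_(i < s) q i = 1 ->
  (forall i, p i <= M * q i) -> L2 u ->
  cov mu u u - cov mu (rscan p u) u <= M * (cov mu u u - cov mu (rscan q u) u).
Proof.
move=> p1 q1 pMq u2.
have gapE r : \sum_(i < s) r i = 1 -> cov mu u u - cov mu (rscan r u) u =
    \sum_(i < s) r i * (cov mu u u - cov mu (Pr i u) (Pr i u)).
  move=> r1; rewrite cov_rscan // -[X in X - _]mul1r -r1 mulr_suml -sumrB.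
  apply: eq_bigr => i _; exact/esym/mulrBr.
rewrite !gapE // mulr_sumr; apply: ler_sum => i _; rewrite mulrA.
by apply: ler_wpM2r => //; rewrite subr_ge0 cov_Pr_le.
Qed.

End random_scan.

Lemma integrable_fin_numP d (T : measurableType d) (R : realType)
    (mu : {measure set T -> \bar R}) (v : T -> R) : measurable_fun setT v ->
  mu.-integrable setT (EFin \o v) <-> (\int[mu]_y (v y)%:E)%E \is a fin_num.
Proof.
move=> mv; rewrite -integral_fin_num_abs //; split; first by case/integrableP.
by move=> v1; apply/integrableP; split => //; exact/measurable_EFinP.
Qed.

(* Unlike [RintegralZl], no integrability is needed: if [v] is not integrable,
   neither is [c * v] for [c != 0], and both sides are [0] by the junk value
   [fine (+-oo) = 0]. *)
Lemma RintegralZl_measurable d (T : measurableType d) (R : realType)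
    (mu : {measure set T -> \bar R}) c (v : T -> R) : measurable_fun setT v ->
  \int[mu]_y (c * v y) = c * \int[mu]_y v y.
Proof.
move=> mv; have [v1|v_not1] := boolP ((\int[mu]_y (v y)%:E)%E \is a fin_num).
  by rewrite RintegralZl // integrable_fin_numP.
have [->|c_neq0] := eqVneq c 0.
  by rewrite mul0r; under eq_Rintegral do rewrite mul0r; rewrite Rintegral_cst // mul0r.
suff cv_not1 : (\int[mu]_y ((c * v y)%:E))%E \isn't a fin_num.
  rewrite /Rintegral; move: v_not1 cv_not1; rewrite !fin_numE !negb_and !negbK.
  by move=> /orP[/eqP->|/eqP->] /orP[/eqP->|/eqP->]; rewrite /= mulr0.
have mcv : measurable_fun setT (fun y => c * v y) by exact: measurable_funM.
apply: contra v_not1 => /(integrable_fin_numP _ mcv) cv1.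
apply/integrable_fin_numP => //; have := integrableZl_EFin c^-1 cv1.
by apply: eq_integrable => // y _ /=; rewrite mulKf.
Qed.

Section kernel_operator.
Context d (T : measurableType d) (R : realType).
Variables (pi : probability T R) (k : R.-pker T ~> T).
Local Notation L2 := (square_integrable pi).

Definition kernel_op (u : T -> R) : T -> R := fun x => \int[k x]_y u y.

Lemma measurable_kernel_op u : measurable_fun setT u ->
  measurable_fun setT (kernel_op u).
Proof.
move=> mu; have mk U : measurable U -> measurable_fun setT (k ^~ U).
  exact: measurable_kernel.
rewrite /kernel_op /Rintegral; under eq_fun do rewrite integralE.
apply: measurableT_comp; first exact: fine_measurable.
have mEu : measurable_fun setT (EFin \o u) by exact/measurable_EFinP.
by apply: emeasurable_funB; apply: measurable_fun_integral_kernel => //;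
  [exact/measurable_funepos | exact/measurable_funeneg].
Qed.

Lemma kernel_op_sqr_le u x : measurable_fun setT u ->
  ((kernel_op u x ^+ 2)%:E <= \int[k x]_y (u y ^+ 2)%:E)%E.
Proof.
move=> mu; have k1 : k x setT = 1%E by exact: prob_kernel.
have [u2|] := boolP (\int[k x]_y (u y ^+ 2)%:E < +oo)%E; last first.
  by rewrite -leNgt leye_eq => /eqP ->; exact: leey.
have u2p : square_integrable (k x) u by exact/square_integrableP.
have fin : (\int[k x]_y (u y ^+ 2)%:E)%E \is a fin_num.
  by rewrite ge0_fin_numE // integral_ge0 // => y _; rewrite lee_fin sqr_ge0.
have := cov_ge0 k1 u2p; rewrite subr_ge0 -(fineK fin) lee_fin expr2 => h.
exact: h.
Qed.

Hypothesis k_inv : forall A, measurable A -> (\int[pi]_x k x A = pi A)%E.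

(* [pi] is the composite of the constant kernel [pi] with [k], and
   [integral_kcomp] disintegrates integrals against a composite kernel. *)
Lemma integral_kernel_invariant (f : T -> \bar R) : (forall x, 0 <= f x)%E ->
  measurable_fun [set: T] f -> (\int[pi]_x \int[k x]_y f y = \int[pi]_x f x)%E.
Proof.
move=> f0 mf.
have pi_cst : measurable_fun [set: unit] (cst (pi : pprobability T R)).
  exact: measurable_cst.
rewrite -(integral_kcomp (kprobability pi_cst) (kernel.kernel_snd k) tt f0 mf).
by apply: eq_measure_integral => A mA _; exact: k_inv.
Qed.

Lemma square_integrable_kernel_op u : L2 u -> L2 (kernel_op u).
Proof.
move=> /square_integrableP[mu u2]; have mPu := measurable_kernel_op mu.
apply/square_integrableP; split => //; apply: le_lt_trans u2.
rewrite -(integral_kernel_invariant (f := fun y => (u y ^+ 2)%:E)); last 2 first.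
- by move=> y; rewrite lee_fin sqr_ge0.
- by apply/measurable_EFinP; exact: measurable_funX.
apply: ge0_le_integral => //.
- by move=> x _; rewrite lee_fin sqr_ge0.
- by apply/measurable_EFinP; exact: measurable_funX.
- apply: measurable_fun_integral_kernel; first exact: measurable_kernel.
    by move=> y; rewrite lee_fin sqr_ge0.
  by apply/measurable_EFinP; exact: measurable_funX.
- by move=> x _; exact: kernel_op_sqr_le.
Qed.

Lemma integrable_kernel_integral (f : T -> \bar R) : (forall x, 0 <= f x)%E ->
  pi.-integrable setT f -> pi.-integrable setT (fun x => \int[k x]_y f y)%E.
Proof.
move=> f0 f1; have mf : measurable_fun setT f by case/integrableP: f1.
apply/integrableP; split.
  by apply: measurable_fun_integral_kernel => //; exact: measurable_kernel.
under eq_integral do rewrite gee0_abs ?integral_ge0 //.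
rewrite integral_kernel_invariant //; case/integrableP: f1 => _.
by under eq_integral do rewrite gee0_abs //.
Qed.

Lemma Rintegral_kernel_op w : pi.-integrable setT (EFin \o w) ->
  \int[pi]_x kernel_op w x = \int[pi]_x w x.
Proof.
move=> w1; have mw : measurable_fun setT (EFin \o w) by case/integrableP: w1.
pose wp x := (\int[k x]_y (EFin \o w)^\+ y)%E.
pose wn x := (\int[k x]_y (EFin \o w)^\- y)%E.
have wp1 : pi.-integrable setT wp.
  exact/integrable_kernel_integral/integrable_funepos.
have wn1 : pi.-integrable setT wn.
  exact/integrable_kernel_integral/integrable_funeneg.
have -> : \int[pi]_x kernel_op w x = fine (\int[pi]_x (wp x - wn x))%E.
  congr fine; apply: ae_eq_integral => //.
  - exact/measurable_EFinP/measurable_kernel_op/measurable_EFinP.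
  - by case/integrableP: (integrableB measurableT wp1 wn1).
  apply: filterS (integrable_ae measurableT (integrableB measurableT wp1 wn1)).
  by move=> x wx _; rewrite /kernel_op /Rintegral integralE fineK //; exact: wx.
rewrite integralB // !integral_kernel_invariant //.
- by rewrite -integralE.
- exact/measurable_funeneg.
- exact/measurable_funepos.
Qed.

Variable S : T -> set T.
Hypothesis measurable_S : forall x, measurable (S x).
Hypothesis k_S : forall x, k x (S x) = 1%E.
Hypothesis k_eq_S : forall x y, S x y -> forall A, measurable A -> k x A = k y A.

Lemma kernel_op_eq u x y : S x y -> kernel_op u y = kernel_op u x.
Proof.
move=> Sxy; rewrite /kernel_op /Rintegral (eq_measure_integral (k x)) // => A mA _.
by rewrite (k_eq_S Sxy mA).
Qed.

Lemma kernel_op_pull_out (a v : T -> R) x : (forall y, S x y -> a y = a x) ->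
  measurable_fun setT a -> measurable_fun setT v ->
  kernel_op (fun y => a y * v y) x = a x * kernel_op v x.
Proof.
move=> a_eq ma mv; rewrite -RintegralZl_measurable //; congr fine.
have k_notS : k x (~` S x) = 0%E.
  have k1 : k x setT = 1%E by exact: prob_kernel.
  rewrite -setTD measureD // ?setTI; last by rewrite [X in (X < _)%E]k1 ltry.
  by rewrite [X in (X - _)%E]k1 [X in (_ - X)%E]k_S subee.
apply: ae_eq_integral => //.
- by apply/measurable_EFinP; exact: measurable_funM.
- by apply/measurable_EFinP; apply: measurable_funM => //; exact: measurable_cst.
exists (~` S x); split => //; first exact: measurableC.
by move=> y /= neq Sxy; apply: neq => _; rewrite a_eq.
Qed.

Lemma cov_kernel_op u v : L2 u -> L2 v ->
  cov pi (kernel_op u) v = cov pi (kernel_op u) (kernel_op v).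
Proof.
move=> u2 v2; have pi1 := probability_setT pi.
have Pu2 := square_integrable_kernel_op u2.
rewrite /cov [\int[pi]_x kernel_op v x]Rintegral_kernel_op; last first.
  exact: square_integrable_integrable.
congr (_ - _); rewrite -[LHS]Rintegral_kernel_op; last first.
  exact: square_integrable_integrableM.
apply: eq_Rintegral => x _; apply: kernel_op_pull_out.
- by move=> y; exact: kernel_op_eq.
- by case: Pu2.
- by case: v2.
Qed.

End kernel_operator.

Section random_scan_gibbs.
Context (R : realType) (d s : nat) (blk : 'I_d -> 'I_s)
  (pi : probability (d.-tuple R) R)
  (k : 'I_s -> R.-pker (d.-tuple R) ~> (d.-tuple R)).
Hypothesis k_full_conditional : forall i, full_conditional_kernel blk pi i (k i).
Local Notation L2 := (square_integrable pi).
Local Notation Pr i := (kernel_op (k i)).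

Let pi1 : pi setT = 1%E := probability_setT pi.

Lemma measurable_same_off_block i (x : d.-tuple R) :
  measurable [set y | same_off_block blk i x y].
Proof.
have -> : [set y | same_off_block blk i x y] =
    \bigcap_(j in [set j | blk j != i]) ((@tnth d R)^~ j @^-1` [set tnth x j]).
  by apply/seteqP; split=> y /= h j; exact: h.
apply: fin_bigcap_measurable; first exact: finite_finset.
move=> j _; rewrite -[X in measurable X]setTI.
exact: measurable_tnth (measurable_set1 _).
Qed.

Lemma kernel_invariant i A : measurable A -> (\int[pi]_x k i x A = pi A)%E.
Proof.
move=> mA; have [_ _ /(_ A setT mA)] := k_full_conditional i.
rewrite setIT; apply.
by split=> [|x y _]; [exact: measurableT | split].
Qed.

Lemma square_integrable_Pr i u : L2 u -> L2 (Pr i u).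
Proof. exact/square_integrable_kernel_op/kernel_invariant. Qed.

Lemma Rintegral_Pr i u : L2 u -> \int[pi]_x Pr i u x = \int[pi]_x u x.
Proof.
by move=> u2; apply/Rintegral_kernel_op/(square_integrable_integrable pi1);
  [exact: kernel_invariant | exact: u2].
Qed.

Lemma cov_Pr i u v : L2 u -> L2 v -> cov pi (Pr i u) v = cov pi (Pr i u) (Pr i v).
Proof.
have [k_S k_eq _] := k_full_conditional i.
apply: (cov_kernel_op (kernel_invariant i) (@measurable_same_off_block i)) => //.
Qed.

Local Notation P := (rscan (fun i => Pr i)).

Lemma L2_rate_okE p rho : \sum_(i < s) p i = 1 ->
  L2_rate_ok pi k p rho <-> is_decay_rate pi (fun i => Pr i) p rho.
Proof.
move=> p1.
have decayE u r n : L2 u ->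
  ((r ^- (2 * n))%:E *
    \int[pi]_x ((iter n (rsgs_op k p) u x - pi_mean pi u) ^+ 2)%:E)%E =
  (r ^- (2 * n) * cov pi (iter n (P p) u) (iter n (P p) u))%:E.
  move=> u2; have -> : pi_mean pi u = \int[pi]_x iter n (P p) u x.
    by rewrite (Rintegral_iter_rscan pi1 square_integrable_Pr Rintegral_Pr n p1 u2).
  rewrite (integral_centered_sqr pi1) ?EFinM //.
  exact: (square_integrable_iter_rscan pi1 square_integrable_Pr).
split=> rate u u2 r rho_lt.
  have := rate u (proj1 (square_integrableP _ _) u2) r rho_lt.
  by under eq_fun do rewrite decayE //; move/fine_cvgP => [].
move/square_integrableP: u2 => u2; under eq_fun do rewrite decayE //.
by apply/fine_cvgP; split; [exact: nearW | exact: rate].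
Qed.

Let decay_rate_of_le p c : pos_prob_vector p -> 0 <= c ->
  (forall u, L2 u -> cov pi (P p u) u <= c * cov pi u u) ->
  forall rho, c < rho -> 0 < rho /\ L2_rate_ok pi k p rho.
Proof.
move=> [p_gt0 p1] c0 form_le rho c_lt; split; first exact: le_lt_trans c_lt.
apply/(L2_rate_okE _ p1).
exact: (is_decay_rate_of_cov_rscan_le pi1 square_integrable_Pr cov_Pr
  (fun i => ltW (p_gt0 i)) c0 form_le).
Qed.

Let admissible_2 p : pos_prob_vector p -> 0 < 2 :> R /\ L2_rate_ok pi k p 2.
Proof.
move=> pp; apply: (decay_rate_of_le pp ler01); last by rewrite ltr1n.
move=> u u2; rewrite mul1r.
exact: (cov_rscan_le pi1 square_integrable_Pr cov_Pr
  (fun i => ltW (pp.1 i)) pp.2 u2).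
Qed.

Lemma L2_rate_le p c : pos_prob_vector p -> 0 <= c ->
  (forall u, L2 u -> cov pi (P p u) u <= c * cov pi u u) -> L2_rate pi k p <= c.
Proof.
move=> pp c0 form_le; apply/ler_addgt0Pr => e e_gt0.
apply: ge_inf; first by exists 0 => rho [/ltW].
by apply: (decay_rate_of_le pp c0 form_le); rewrite ltrDl.
Qed.

Lemma L2_rate_ge0 p : pos_prob_vector p -> 0 <= L2_rate pi k p.
Proof.
move=> pp; apply: lb_le_inf; first by exists 2; exact: admissible_2.
by move=> rho [/ltW].
Qed.

Lemma cov_rscan_le_L2_rate p u : pos_prob_vector p -> L2 u ->
  cov pi (P p u) u <= L2_rate pi k p * cov pi u u.
Proof.
move=> [p_gt0 p1] u2; have pp : pos_prob_vector p by [].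
have le_rate rho : 0 < rho /\ L2_rate_ok pi k p rho ->
    cov pi (P p u) u <= rho * cov pi u u.
  move=> [rho_gt0 /(L2_rate_okE _ p1) rate].
  exact: (cov_rscan_le_of_is_decay_rate pi1 square_integrable_Pr cov_Pr
    (fun i => ltW (p_gt0 i)) (ltW rho_gt0) rate).
have [uu_eq0|uu_neq0] := eqVneq (cov pi u u) 0.
  by rewrite uu_eq0 mulr0; have := le_rate 2 (admissible_2 pp); rewrite uu_eq0 mulr0.
have uu_gt0 : 0 < cov pi u u by rewrite lt_neqAle eq_sym uu_neq0 cov_ge0.
rewrite -ler_pdivrMr //; apply: lb_le_inf; first by exists 2; exact: admissible_2.
by move=> rho /le_rate; rewrite ler_pdivrMr.
Qed.

Lemma Gap_le_max_ratio p q : pos_prob_vector p -> pos_prob_vector q ->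
  Gap pi k p <= (\big[Num.max/0]_(i < s) (p i / q i)) * Gap pi k q.
Proof.
move=> pp [q_gt0 q1]; set M := \big[Num.max/0]_(i < s) _.
have pMq i : p i <= M * q i by rewrite -ler_pdivrMr // le_bigmax.
have M_ge1 : 1 <= M.
  by rewrite -pp.2 -[M]mulr1 -q1 mulr_sumr; apply: ler_sum => i _.
have M_gt0 : 0 < M := lt_le_trans ltr01 M_ge1.
have rp0 := L2_rate_ge0 pp; set rp := L2_rate pi k p in rp0 *.
suff : L2_rate pi k q <= 1 - (1 - rp) / M.
  by rewrite /Gap -/rp -ler_pdivrMl // mulrC; lra.
apply: L2_rate_le => //.
  by rewrite subr_ge0 ler_pdivrMr // mul1r; lra.
move=> u u2; have := cov_rscan_le_L2_rate pp u2.
have := cov_rscan_comparison pi1 square_integrable_Pr cov_Pr pp.2 q1 pMq u2.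
rewrite -/rp; set U := cov pi u u; set A := cov pi _ u; set B := cov pi _ u.
move=> gap_le A_le; have : (1 - rp) / M * U <= U - B.
  by rewrite mulrAC ler_pdivrMr // mulrC; lra.
lra.
Qed.

End random_scan_gibbs.

Lemma pos_prob_vector_dim_gt0 (R : realType) s (p : 'I_s -> R) :
  pos_prob_vector p -> (0 < s)%N.
Proof. by case: s p => // p [_]; rewrite big_ord0 => /esym/eqP; rewrite oner_eq0. Qed.

Lemma pos_prob_vector_uniform (R : realType) s :
  (0 < s)%N -> pos_prob_vector (@uniform_vector R s).
Proof.
move=> s_gt0; split=> [i|]; first by rewrite invr_gt0 ltr0n.
by rewrite sumr_const card_ord -[LHS]mulr_natr mulVf // pnatr_eq0 -lt0n.
Qed.

Theorem theorem4 (R : realType) (d s : nat) (blk : 'I_d -> 'I_s)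
  (pi : probability (d.-tuple R) R)
  (k : 'I_s -> R.-pker (d.-tuple R) ~> (d.-tuple R)) :
  (forall i : 'I_s, exists j : 'I_d, blk j = i) ->
  (forall i : 'I_s, full_conditional_kernel blk pi i (k i)) ->
  forall p : 'I_s -> R, pos_prob_vector p ->
    (forall q : 'I_s -> R, pos_prob_vector q ->
       Gap pi k p <= (\big[Num.max/0]_(i < s) (p i / q i)) * Gap pi k q) /\
    Gap pi k p <= (\big[Num.max/0]_(i < s) ((s%:R : R) * p i))
                  * Gap pi k (@uniform_vector R s).
Proof.
move=> _ k_fc p pp; split=> [q pq|]; first exact: Gap_le_max_ratio.
have pu := pos_prob_vector_uniform R (pos_prob_vector_dim_gt0 pp).
rewrite (eq_bigr (fun i => p i / @uniform_vector R s i)); first exact: Gap_le_max_ratio.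
by move=> i _; rewrite /uniform_vector invrK mulrC.
Qed.
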